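(* Let $\varphi$ be an individually rational rule. Then $\varphi$ is pick-an-object implementable in perfect ex-post equilibrium if and only if $\varphi$ is strategy-proof and satisfies monotonic discoverability. Moreover, for every rule that is pick-an-object implementable in perfect ex-post equilibrium, straightforward strategies constitute a perfect ex-post equilibrium profile of every pick-an-object mechanism that sequentializes that rule.
   Context: Let $A=\{a_1,\dots,a_n\}$ be a finite set of agents and $O=\{o_1,\dots,o_m\}\cup\{\emptyset\}$ a finite set of object types ($\emptyset$ the null object). Each agent $a$ has a strict preference $P_a$ over $O$ with weak version $R_a$. $\mathbb{P}$ is the set of strict preferences over $O$, $\mathcal{P}=\mathbb{P}^n$ the set of profiles; $P_{-a}$ denotes the preferences of agents other than $a$. An allocation is a function $\mu:A\to O$. A rule is $\varphi:\mathcal{P}\to\{\text{allocations}\}$, $\varphi_a(P)=\varphi(P)(a)$. $\varphi$ is individually rational if $\varphi_a(P)R_a\emptyset$ always; strategy-proof if $\varphi_a(P_a,P_{-a})\,R_a\,\varphi_a(P'_a,P_{-a})$ for all $a$, $P$, $P'_a\in\mathbb{P}$. Monotonic discoverability: for $P\in\mathcal{P}$ and allocation $\mu$, $\mathcal{L}(P,\mu)$ is the set of profiles $P'$ such that for every agent $a$, $P'_a$ agrees with $P_a$ on $\mu(a)$ and on all objects $P_a$ ranks above $\mu(a)$ (same set above $\mu(a)$, same order), possibly differing below. $\varphi$ satisfies monotonic discoverability if for every $\mu$ and $P$, either $\varphi(P)=\mu$ or some agent $a^*$ has $\varphi_{a^*}(P')\neq\mu(a^* )$ for all $P'\in\mathcal{L}(P,\mu)$.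 Pick-an-object (PAO) mechanisms: a choice history is a finite (possibly empty) sequence $((\Omega_1,\omega_1),\dots,(\Omega_k,\omega_k))$ with $\Omega_j\subseteq O$, $\omega_j\in\Omega_j$; $\omega_k$ is its last choice. A collective history is an $n$-tuple of choice histories; $h^{A-\emptyset}$ is the tuple of empty ones. A menu function $\mathbb{S}$ maps collective histories to $n$-tuples of subsets of $O$ such that the menus in $\mathbb{S}(h^{A-\emptyset})$ are non-empty and, for other collective histories, agent $i$'s menu is a subset of $\Omega_k\setminus\{\omega_k\}$, where $(\Omega_k,\omega_k)$ is the last entry of $i$'s history. The PAO mechanism $\mathbb{S}$: in period 1 every agent chooses from her initial menu; in each later period, given the current collective history $h^A$, if all menus in $\mathbb{S}(h^A)$ are empty the procedure stops and each agent receives her last chosen object, otherwise each agent with a non-empty menu chooses an element of it; each (menu, choice) is appended to the chooser's history. $H^A_{\mathbb{S}}$ is the set of collective histories that can arise; $H^A_{\mathbb{S}}(a)$ the set of agent $a$'s individual histories within them. The straightforward strategy w.r.t. $P_a$ chooses the $P_a$-best element of every menu. $\mathbb{S}$ sequentializes $\varphi$ if, for every $P$, when all agents play straightforward strategies w.r.t. $P$ the outcome is $\varphi(P)$. Strategies and equilibrium: a strategy for agent $a$ maps each pair $(h,\Omega)$ of an own history $h\in H^A_{\mathbb{S}}(a)\cup\{\emptyset\}$ and a menu $\Omega$ to an element of $\Omega$ (so that the extended history is in $H^A_{\mathbb{S}}(a)$). A type-strategy $\Sigma_a$ maps each preference to a strategy. For $h^A\in H^A_{\mathbb{S}}\cup\{h^{A-\emptyset}\}$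 and strategy profile $\sigma$, $\mathcal{O}|_{h^A}(\sigma)$ is the allocation produced by running $\mathbb{S}$ from $h^A$ with agents following $\sigma$, and $\mathcal{O}_a|_{h^A}(\sigma)$ is agent $a$'s assignment. A type-strategy profile $(\Sigma_a)_{a\in A}$ is a perfect ex-post equilibrium if for every $a\in A$, $h^A\in H^A_{\mathbb{S}}\cup\{h^{A-\emptyset}\}$, strategy $\sigma'_a$, and $P\in\mathcal{P}$: $\mathcal{O}_a|_{h^A}(\Sigma_a(P_a),(\Sigma_{a'}(P_{a'}))_{a'\neq a})\ R_a\ \mathcal{O}_a|_{h^A}(\sigma'_a,(\Sigma_{a'}(P_{a'}))_{a'\neq a})$. A rule $\varphi$ is pick-an-object implementable in perfect ex-post equilibrium if some PAO mechanism sequentializes $\varphi$ and, in it, the profile in which each agent of type $P_a$ plays the straightforward strategy w.r.t. $P_a$ is a perfect ex-post equilibrium. *)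

From mathcomp Require Import all_boot.
Set Implicit Arguments. Unset Strict Implicit. Unset Printing Implicit Defensive.

Section Model.
Variables (Agent Obj : finType).

(* Object types: the real objects [Some o] plus the null object [None]. *)
Local Notation O := (option Obj).
Definition null : O := None.

(* A strict preference: [prel p x y] means "x is strictly preferred to y". *)
Definition strict_pref (P : rel O) : Prop :=
  irreflexive P /\ transitive P /\ (forall x y, x != y -> P x y || P y x).
Definition pref := {P : rel O | strict_pref P}.
Definition prel (p : pref) : rel O := proj1_sig p.
Definition weak (p : pref) (x y : O) : bool := (x == y) || prel p x y.

Definition profile := Agent -> pref.
Definition allocation := Agent -> O.
Definition rule := profile -> allocation.

Definition upd (P : profile) (a : Agent) (pa : pref) : profile :=
  fun b => if b == a then pa else P b.

Definition individually_rational (phi : rule) : Prop :=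
  forall (P : profile) (a : Agent), weak (P a) (phi P a) null.

Definition strategy_proof (phi : rule) : Prop :=
  forall (P : profile) (a : Agent) (pa' : pref),
    weak (P a) (phi P a) (phi (upd P a pa') a).

Definition agrees_above (p p' : pref) (o : O) : Prop :=
  (forall x, prel p' x o = prel p x o) /\
  (forall x y, prel p x o -> prel p y o -> prel p' x y = prel p x y).

Definition Lset (P : profile) (mu : allocation) (P' : profile) : Prop :=
  forall a, agrees_above (P a) (P' a) (mu a).

Definition monotonic_discoverability (phi : rule) : Prop :=
  forall (mu : allocation) (P : profile),
    (forall a, phi P a = mu a) \/
    exists a0 : Agent, forall P' : profile, Lset P mu P' -> phi P' a0 <> mu a0.

Definition entry := ({set O} * O)%type.            (* (menu, choice) *)
Definition chist := seq entry.
Definition chist_valid (h : chist) : bool := all (fun e : entry => e.2 \in e.1) h.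
Definition coll := {ffun Agent -> chist}.
Definition coll_empty : coll := [ffun => [::]].
Definition menufun := coll -> Agent -> {set O}.
Definition last_entry (h : chist) : entry := last (set0, null) h.

Definition is_PAO (S : menufun) : Prop :=
  (forall i, S coll_empty i != set0) /\
  (forall h : coll, (forall i, chist_valid (h i)) -> h != coll_empty ->
     forall i, h i != [::] ->
       S h i \subset (last_entry (h i)).1 :\ (last_entry (h i)).2).

Definition strategy := chist -> {set O} -> O.
Definition is_strategy (s : strategy) : Prop :=
  forall h W, W != set0 -> s h W \in W.

Definition all_empty (S : menufun) (h : coll) : bool := [forall i, S h i == set0].

Definition step (S : menufun) (sig : Agent -> strategy) (h : coll) : coll :=
  [ffun i => if S h i == set0 then h i
             else rcons (h i) (S h i, sig i (h i) (S h i))].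

Fixpoint run (S : menufun) (sig : Agent -> strategy) (n : nat) (h : coll) : coll :=
  match n with
  | 0 => h
  | n'.+1 => if all_empty S h then h else run S sig n' (step S sig h)
  end.

(* Enough periods: every agent chooses at most #|O| times (menus strictly shrink). *)
Definition fuel : nat := (#|Agent| * #|{: option Obj}|).+1.

Definition outcome (S : menufun) (sig : Agent -> strategy) (h : coll) : allocation :=
  fun i => (last_entry (run S sig fuel h i)).2.

Inductive reachable (S : menufun) : coll -> Prop :=
| reach0 : reachable S coll_empty
| reachS (h : coll) (c : Agent -> O) :
    reachable S h -> ~~ all_empty S h ->
    (forall i, S h i != set0 -> c i \in S h i) ->
    reachable S [ffun i => if S h i == set0 then h i else rcons (h i) (S h i, c i)].

(* P-best element of a menu (null if the menu is empty, irrelevant). *)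
Definition best (p : pref) (W : {set O}) : O :=
  odflt null [pick x in W | [forall y in W, (y == x) || prel p x y]].
Definition straightforward (p : pref) : strategy := fun _ W => best p W.

Definition sequentializes (S : menufun) (phi : rule) : Prop :=
  forall (P : profile) (i : Agent),
    outcome S (fun a => straightforward (P a)) coll_empty i = phi P i.

Definition typestrat := Agent -> pref -> strategy.

Definition perfect_ex_post (S : menufun) (Sig : typestrat) : Prop :=
  forall (a : Agent) (h : coll), reachable S h ->
  forall s' : strategy, is_strategy s' ->
  forall P : profile,
    weak (P a) (outcome S (fun b => Sig b (P b)) h a)
               (outcome S (fun b => if b == a then s' else Sig b (P b)) h a).

Definition pao_implementable (phi : rule) : Prop :=
  exists S : menufun, is_PAO S /\ sequentializes S phi /\
    perfect_ex_post S (fun _ => straightforward).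

End Model.

From mathcomp Require Import all_boot.
From Stdlib Require Import Classical ClassicalDescription.

Set Implicit Arguments. Unset Strict Implicit. Unset Printing Implicit Defensive.

(* Strategy-proofness is the equilibrium condition at the empty history against a
   straightforward deviation. For monotonic discoverability, run the mechanism under P: as long
   as every agent who moves finds in her menu an object she weakly prefers to mu(a), her P-best
   choice is also her P'-best choice for every P' in L(P, mu), so all these profiles produce
   the same play; once some agent a faces a menu of objects all worse than mu(a), her later
   menus are subsets of it and she does not receive mu(a) under any P' in L(P, mu).

   After a first period in which everybody picks from all of O, the mechanism
   lets a "certified" agent, one who gets something other than her current pick under every
   profile consistent with the history, pick again from her last menu without her last pick,
   and stops when nobody is certified. Under straightforward play w.r.t. P, phi(P)(a) stays in
   a's menu, and every profile consistent with the final history lies in L(P, mu) for the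
   final picks mu; so if mu <> phi(P), monotonic discoverability yields a certified agent and
   the mechanism could not have stopped.

   Given a reachable history h and a deviation of agent a, promote to the top of
   each preference the objects chosen in h, and in a's preference also those she picks while
   deviating. Menus after h avoid earlier choices, so the others behave as before and the
   deviation becomes straightforward play of a profile consistent with h. Both outcomes are
   thus values of phi, compared by strategy-proofness; if a moves after h, neither outcome was
   chosen in h, and the promotion does not change how P(a) ranks them. *)

Section Preferences.
Variable Obj : finType.
Local Notation O := (option Obj).
Implicit Types (p : pref Obj) (W : {set O}) (o w x y : O).

Lemma prel_irr p x : prel p x x = false.
Proof. by have [irr _] := proj2_sig p; apply: irr. Qed.

Lemma prel_trans p : transitive (prel p).
Proof. by have [_ []] := proj2_sig p. Qed.

Lemma prel_total p x y : x != y -> prel p x y || prel p y x.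
Proof. by have [_ [_ tot]] := proj2_sig p; apply: tot. Qed.

Lemma prel_asym p x y : prel p x y -> prel p y x = false.
Proof. by move=> pxy; apply/negbTE/negP => /(prel_trans pxy); rewrite prel_irr. Qed.

Lemma weak_refl p x : weak p x x.
Proof. by rewrite /weak eqxx. Qed.

Lemma exists_prel_max p W : W != set0 ->
  exists2 x, x \in W & forall y, y \in W -> y != x -> prel p x y.
Proof.
case/set0Pn=> x0 x0W; pose above x := [set y in W | prel p y x].
have [x xW xmin] := arg_minnP (fun x => #|above x|) x0W.
exists x => // y yW yx; apply/negPn/negP => nxy.
have pyx : prel p y x by move: (prel_total p yx); rewrite (negbTE nxy) orbF.
suff : #|above y| < #|above x| by rewrite ltnNge xmin.
apply/proper_card/properP; split.
  by apply/subsetP=> z; rewrite !inE => /andP[-> /prel_trans]; apply.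
by exists y; rewrite !inE ?yW ?pyx ?prel_irr.
Qed.

Lemma best_spec p W : W != set0 ->
  best p W \in W /\ forall y, y \in W -> y != best p W -> prel p (best p W) y.
Proof.
move=> /(exists_prel_max p) [x xW xmax]; rewrite /best.
case: pickP => [b /andP[bW /forallP bmax] | none] /=.
  by split=> // y yW; move: (bmax y); rewrite yW /= => /orP[/eqP->|]; rewrite ?eqxx.
have /negP[] := negbT (none x); rewrite xW /=; apply/forall_inP => y yW.
by case: eqVneq => //= yx; apply: xmax.
Qed.

Lemma best_in p W : W != set0 -> best p W \in W.
Proof. by case/(best_spec p). Qed.

Lemma best_prel p W y : W != set0 -> y \in W -> y != best p W -> prel p (best p W) y.
Proof. by case/(best_spec p) => _; apply. Qed.
#[global] Arguments best_prel p {W y}.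

Lemma best_eq p W x :
  x \in W -> (forall y, y \in W -> y != x -> prel p x y) -> best p W = x.
Proof.
move=> xW xmax; have W0 : W != set0 by apply/set0Pn; exists x.
apply/eqP/negPn/negP => bx; have xb := xmax _ (best_in p W0) bx.
by have := best_prel p W0 xW; rewrite eq_sym bx (prel_asym xb) => /(_ isT).
Qed.

Lemma prel_best p W x : x \in W -> prel p x (best p W) = false.
Proof.
move=> xW; have W0 : W != set0 by apply/set0Pn; exists x.
by have [->|xb] := eqVneq x (best p W); [apply: prel_irr | apply/prel_asym/best_prel].
Qed.

Lemma best_set0 p : best p set0 = None.
Proof. by rewrite /best; case: pickP => // x; rewrite inE. Qed.

Lemma best_agrees_above p p' o W :
  agrees_above p p' o -> (exists2 u, u \in W & weak p u o) -> best p' W = best p W.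
Proof.
move=> [above order] [u uW uo]; have W0 : W != set0 by apply/set0Pn; exists u.
set b := best p W; have bW : b \in W by apply: best_in.
have bo : weak p b o.
  have [<-//|ub] := eqVneq u b; have bu := best_prel p W0 uW ub.
  rewrite /weak; case/orP: uo => [/eqP <-|uo]; first by rewrite bu orbT.
  by rewrite (prel_trans bu uo) orbT.
have below y : y != o -> ~~ prel p y o -> prel p' o y.
  by move=> yo; rewrite -above => /negbTE npy; move: (prel_total p' yo); rewrite npy.
apply: best_eq => // y yW yb; have b_y : prel p b y by apply: best_prel.
case/orP: bo => [/eqP bo | bo].
  by rewrite bo; apply: below; rewrite -bo // (prel_asym b_y).
have [-> | yo] := eqVneq y o; first by rewrite above.
have [yo'|yo'] := boolP (prel p y o); first by rewrite order.
by apply: prel_trans (below _ yo yo'); rewrite above.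
Qed.

Definition promote_rel w p : rel O :=
  fun x y => if x == w then y != w else (y != w) && prel p x y.

Lemma promote_rel_strict w p : strict_pref (promote_rel w p).
Proof.
rewrite /promote_rel; split; last split.
- by move=> x; case: eqP => // _; rewrite prel_irr andbF.
- move=> y x z; case: (x =P w) => _; case: (y =P w) => //= _.
  + by move=> _ /andP[].
  + by move=> xy /andP[-> /(prel_trans xy) ->].
- move=> x y xy; case: (x =P w) => [xw|_]; case: (y =P w) => [yw|_] //=.
  + by rewrite xw yw eqxx in xy.
  + exact: prel_total.
Qed.

Definition promote w p : pref Obj := exist _ (promote_rel w p) (promote_rel_strict w p).

Lemma prel_promote_off w p x y :
  x != w -> y != w -> prel (promote w p) x y = prel p x y.
Proof. by move=> /negbTE xw yw; rewrite /= /promote_rel xw yw. Qed.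

Lemma best_promote_in w p W : w \in W -> best (promote w p) W = w.
Proof. by move=> wW; apply: best_eq => // y _ yw; rewrite /= /promote_rel eqxx. Qed.

Lemma best_promote_notin w p W : w \notin W -> best (promote w p) W = best p W.
Proof.
move=> wW; have [->|W0] := eqVneq W set0; first by rewrite !best_set0.
have off y : y \in W -> y != w by apply: contraTneq => ->.
apply: best_eq => [|y yW yb]; first exact: best_in.
by rewrite prel_promote_off ?off ?best_in // best_prel.
Qed.

End Preferences.

Section Histories.
Variable Obj : finType.
Local Notation O := (option Obj).
Implicit Types (hb : chist Obj) (e : entry Obj) (p : pref Obj) (W : {set O}).

Fixpoint nested hb : bool :=
  if hb is e :: r then
    [&& e.2 \in e.1, all (fun e' : entry Obj => e'.1 \subset e.1 :\ e.2) r & nested r]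
  else true.

Lemma last_entry_cons e hb : hb != [::] -> last_entry (e :: hb) = last_entry hb.
Proof. by case: hb. Qed.

Lemma mem_last_entry hb : hb != [::] -> last_entry hb \in hb.
Proof. by case: hb => // e hb _; rewrite /last_entry /= mem_last. Qed.

Lemma last_entry_rcons hb e : last_entry (rcons hb e) = e.
Proof. exact: last_rcons. Qed.

Lemma nested_choice_in_menu hb e : nested hb -> e \in hb -> e.2 \in e.1.
Proof.
elim: hb => // e' hb IH /and3P[e'_in _ nest_hb].
by rewrite inE => /orP[/eqP->|/IH]; last exact.
Qed.

Lemma nested_rcons hb e : nested hb -> e.2 \in e.1 ->
  (hb != [::] -> e.1 \subset (last_entry hb).1 :\ (last_entry hb).2) ->
  nested (rcons hb e).
Proof.
elim: hb => [|e' hb IH] /=; first by move=> _ ->.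
move=> /and3P[e'_in sub_hb nest_hb] e_in /(_ isT) sub_e; rewrite e'_in /=.
have [hb0|hbN0] := eqVneq hb [::].
  by move: sub_e; rewrite hb0 /last_entry /= => ->; rewrite e_in.
rewrite last_entry_cons // in sub_e.
rewrite all_rcons sub_hb IH // !andbT.
apply: (subset_trans sub_e); apply: subset_trans (subD1set _ _) _.
exact: (allP sub_hb) _ (mem_last_entry hbN0).
Qed.

Lemma nested_cat (s1 s2 : chist Obj) e e' :
  nested (s1 ++ s2) -> e \in s1 -> e' \in s2 -> e'.1 \subset e.1 :\ e.2.
Proof.
elim: s1 => // e0 s1 IH /and3P[_ sub_s nest_s].
rewrite inE => /orP[/eqP-> e's2|/IH]; last exact.
by apply: (allP sub_s); rewrite mem_cat e's2 orbT.
Qed.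

Lemma nested_choice_notin_last_menu hb e : nested hb -> hb != [::] -> e \in hb ->
  e.2 \notin (last_entry hb).1 :\ (last_entry hb).2.
Proof.
elim: hb => // e0 hb IH /and3P[_ sub_hb nest_hb] _.
have [->|hbN0] := eqVneq hb [::].
  by rewrite mem_seq1 => /eqP->; rewrite !inE eqxx.
rewrite last_entry_cons // inE => /orP[/eqP->|/IH]; last exact.
apply: contraL (allP sub_hb _ (mem_last_entry hbN0)) => /setD1P[_ last_in].
by apply/subsetP => /(_ _ last_in); rewrite !inE eqxx.
Qed.

Lemma nested_last_choice_fresh (s1 s2 : chist Obj) : nested (s1 ++ s2) -> s2 != [::] ->
  (last_entry (s1 ++ s2)).2 \notin map snd s1.
Proof.
move=> nest s2N0; set l := last_entry _.
have l_s2 : l \in s2.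
  by rewrite /l /last_entry last_cat; case: (s2) s2N0 => // e s _; exact: (mem_last e s).
have l_in : l.2 \in l.1 by apply: nested_choice_in_menu nest _; rewrite mem_cat l_s2 orbT.
apply/mapP => -[e e_s1 le].
by have /subsetP/(_ _ l_in) := nested_cat nest e_s1 l_s2; rewrite le !inE eqxx.
Qed.

Definition promote_choices hb p : pref Obj := foldr (fun e q => promote e.2 q) p hb.

Definition consistent hb p : Prop := forall e, e \in hb -> best p e.1 = e.2.

Lemma best_promote_choices_off hb p W :
  (forall e, e \in hb -> e.2 \notin W) -> best (promote_choices hb p) W = best p W.
Proof.
elim: hb => //= e hb IH fresh.
rewrite best_promote_notin ?fresh ?mem_head // IH // => e' e'_hb.
by rewrite fresh // inE e'_hb orbT.
Qed.

Lemma consistent_promote_choices hb p : nested hb -> consistent hb (promote_choices hb p).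
Proof.
elim: hb => [_ e|e hb IH /and3P[e_in sub_hb nest_hb] e']; first by rewrite in_nil.
rewrite inE => /orP[/eqP->|e'_hb]; first exact: best_promote_in.
rewrite /= best_promote_notin; first exact: IH.
by apply: contraL (allP sub_hb _ e'_hb) => e'_in; apply/subsetP => /(_ _ e'_in); rewrite !inE eqxx.
Qed.

Lemma prel_promote_choices_off hb p x y : x \notin map snd hb -> y \notin map snd hb ->
  prel (promote_choices hb p) x y = prel p x y.
Proof.
elim: hb => // e hb IH; rewrite !inE !negb_or => /andP[xe x_hb] /andP[ye y_hb].
by rewrite -IH //; apply: prel_promote_off.
Qed.

Lemma weak_promote_choices_off hb p x y : x \notin map snd hb -> y \notin map snd hb ->
  weak (promote_choices hb p) x y -> weak p x y.
Proof. by move=> x_hb y_hb; rewrite /weak prel_promote_choices_off. Qed.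

Lemma consistent_rcons hb e p : consistent (rcons hb e) p -> consistent hb p /\ best p e.1 = e.2.
Proof.
by move=> cons_p; split=> [e' e'_hb|]; apply: cons_p; rewrite mem_rcons inE ?e'_hb ?eqxx ?orbT.
Qed.

Inductive menu_chain : chist Obj -> Prop :=
| chain_start w : menu_chain [:: (setT, w)]
| chain_next hb w : menu_chain hb -> (last_entry hb).1 :\ (last_entry hb).2 != set0 ->
    menu_chain (rcons hb ((last_entry hb).1 :\ (last_entry hb).2, w)).

Lemma menu_chain_nonempty hb : menu_chain hb -> hb != [::].
Proof. by case=> // hb' w _ _; case: hb'. Qed.

Lemma menu_chain_prel_last p hb : menu_chain hb -> consistent hb p ->
  forall x, prel p x (last_entry hb).2 = (x \notin (last_entry hb).1).
Proof.
elim=> [w|s w chain IH W'N0] cons_p x.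
  have /= best_w := cons_p _ (mem_head _ [::]).
  by rewrite /= inE -best_w prel_best ?inE.
have [cons_s best_w] := consistent_rcons cons_p.
rewrite last_entry_rcons -{}best_w /=.
move: W'N0 (IH cons_s) (cons_s _ (mem_last_entry (menu_chain_nonempty chain))).
set W := (last_entry s).1; set w0 := (last_entry s).2 => W'N0 IHx best_w0.
have [xW'|xW'] := boolP (x \in W :\ w0); first by rewrite prel_best.
have /setD1P[ww0 wW] := best_in p W'N0.
have w0w : prel p w0 (best p (W :\ w0)).
  have W0 : W != set0 by apply/set0Pn; exists (best p (W :\ w0)).
  by have := best_prel p W0 wW; rewrite best_w0; apply.
move: xW'; rewrite !inE negb_and negbK => /orP[/eqP-> //|xW].
by apply: prel_trans w0w; rewrite IHx.
Qed.

Lemma menu_chain_prel_above p q hb : menu_chain hb -> consistent hb p -> consistent hb q ->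
  forall x y, prel p x (last_entry hb).2 -> prel p y (last_entry hb).2 ->
  prel q x y = prel p x y.
Proof.
move=> chain; elim: chain => [w|s w chain IH W'N0] cons_p cons_q x y.
  by rewrite (menu_chain_prel_last (chain_start w) cons_p) inE.
rewrite !(menu_chain_prel_last (chain_next w chain W'N0) cons_p) last_entry_rcons /=.
have [cons_s_p _] := consistent_rcons cons_p; have [cons_s_q _] := consistent_rcons cons_q.
have last_p := menu_chain_prel_last chain cons_s_p.
have last_q := menu_chain_prel_last chain cons_s_q.
rewrite !inE !negb_and !negbK => /orP[/eqP->|xW] /orP[/eqP->|yW].
- by rewrite !prel_irr.
- have yp : prel p y (last_entry s).2 by rewrite last_p.
  have yq : prel q y (last_entry s).2 by rewrite last_q.
  by rewrite (prel_asym yp) (prel_asym yq).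
- by rewrite last_p last_q.
- by apply: IH; rewrite ?last_p.
Qed.

Lemma menu_chain_agrees_above p q hb : menu_chain hb -> consistent hb p -> consistent hb q ->
  agrees_above p q (last_entry hb).2.
Proof.
move=> chain cons_p cons_q; split; last exact: menu_chain_prel_above.
by move=> x; rewrite (menu_chain_prel_last chain cons_p) (menu_chain_prel_last chain cons_q).
Qed.

End Histories.

Section Mechanism.
Variables Agent Obj : finType.
Local Notation O := (option Obj).
Local Notation coll := (coll Agent Obj).
Local Notation profile := (profile Agent Obj).
Local Notation empty := (coll_empty Agent Obj).
Local Notation fuel := (fuel Agent Obj).
Implicit Types (g h : coll) (P Q : profile) (sig : Agent -> strategy Obj) (a b : Agent).

Definition truthful P : Agent -> strategy Obj := fun b => straightforward (P b).

Definition consistent_coll h P : Prop := forall b, consistent (h b) (P b).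

Definition valid_strategies sig : Prop := forall b, is_strategy (sig b).

Lemma straightforward_is_strategy (p : pref Obj) : is_strategy (straightforward p).
Proof. by move=> hb W; apply: best_in. Qed.

Lemma truthful_valid P : valid_strategies (truthful P).
Proof. by move=> b; apply: straightforward_is_strategy. Qed.

Lemma coll_nonempty g b : g b != [::] -> g != empty.
Proof. by apply: contraNneq => ->; rewrite ffunE. Qed.

Variable S : menufun Agent Obj.
Hypothesis S_PAO : is_PAO S.

Lemma reachable_nested g : reachable S g -> forall b, nested (g b).
Proof.
elim=> [|h c _ IH _ c_in] b; first by rewrite ffunE.
rewrite ffunE; case: ifP => // /negbT Sb.
apply: nested_rcons => //=; first exact: c_in.
move=> hbN0; case: S_PAO => _; apply=> //; last exact: coll_nonempty hbN0.
by move=> i; apply/allP => e; apply: nested_choice_in_menu.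
Qed.

Lemma menu_sub_last g b : reachable S g -> g b != [::] ->
  S g b \subset (last_entry (g b)).1 :\ (last_entry (g b)).2.
Proof.
move=> reach_g gbN0; case: S_PAO => _; apply=> //; last exact: coll_nonempty gbN0.
by move=> i; apply/allP => e; apply/nested_choice_in_menu/reachable_nested.
Qed.

Lemma menu_avoids_history g b e : reachable S g -> e \in g b -> e.2 \notin S g b.
Proof.
move=> reach_g e_in; have gbN0 : g b != [::] by apply: contraTneq e_in => ->.
apply: contra (nested_choice_notin_last_menu (reachable_nested reach_g b) gbN0 e_in).
exact: (subsetP (menu_sub_last reach_g gbN0)).
Qed.

Lemma reachable_step sig g : reachable S g -> ~~ all_empty S g -> valid_strategies sig ->
  reachable S (step S sig g).
Proof. by move=> reach_g ne valid; apply: reachS => // i; apply: valid. Qed.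

Lemma step_congr sig1 sig2 g :
  (forall b, S g b != set0 -> sig1 b (g b) (S g b) = sig2 b (g b) (S g b)) ->
  step S sig1 g = step S sig2 g.
Proof.
by move=> agree; apply/ffunP => b; rewrite !ffunE; case: ifP => // /negbT/agree ->.
Qed.

Definition hist_potential (hb : chist Obj) : nat :=
  if hb is [::] then #|{: O}| else #|(last_entry hb).1|.-1.

Definition potential g : nat := \sum_b hist_potential (g b).

Lemma hist_potential_rcons hb e : hist_potential (rcons hb e) = #|e.1|.-1.
Proof. by rewrite /hist_potential last_entry_rcons; case: hb. Qed.

Lemma hist_potential_move_lt g b x : reachable S g -> S g b != set0 ->
  hist_potential (rcons (g b) (S g b, x)) < hist_potential (g b).
Proof.
move=> reach_g Sb; rewrite hist_potential_rcons /=.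
have Sb_pos : 0 < #|S g b| by rewrite card_gt0.
have [-> | gbN0] := eqVneq (g b) [::].
  by apply: (leq_trans _ (max_card (S g b))); rewrite ltn_predL.
have := subset_leq_card (menu_sub_last reach_g gbN0).
have := cardsD1 (last_entry (g b)).2 (last_entry (g b)).1.
rewrite (nested_choice_in_menu (reachable_nested reach_g b) (mem_last_entry gbN0)) add1n.
have -> : hist_potential (g b) = #|(last_entry (g b)).1|.-1 by case: (g b) gbN0.
by move=> -> sub; rewrite /= -ltnS prednK.
Qed.

Lemma potential_step_lt sig g : reachable S g -> ~~ all_empty S g ->
  potential (step S sig g) < potential g.
Proof.
move=> reach_g /forallPn[b Sb].
have le i : hist_potential (step S sig g i) <= hist_potential (g i).
  by rewrite ffunE; case: ifP => // /negbT Si; apply/ltnW/hist_potential_move_lt.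
rewrite /potential (bigD1 b) //= [X in _ < X](bigD1 b) //= -addSn leq_add ?leq_sum //.
by rewrite ffunE (negbTE Sb); apply: hist_potential_move_lt.
Qed.

Lemma reachable_potential_lt_fuel h : reachable S h -> potential h < fuel.
Proof.
elim=> [|g c reach_g IH ne _].
  rewrite /potential (eq_bigr (fun=> #|{: O}|)) => [|b _]; last by rewrite ffunE.
  by rewrite sum_nat_const.
exact: leq_trans (potential_step_lt (fun i _ _ => c i) reach_g ne) (ltnW IH).
Qed.

Lemma run_all_empty sig n g : all_empty S g -> run S sig n g = g.
Proof. by case: n => //= n ->. Qed.

Lemma run_add sig m n g : run S sig (m + n) g = run S sig n (run S sig m g).
Proof.
elim: m g => // m IH g; rewrite addSn /=.
by case: ifP => [done_g|_]; [rewrite run_all_empty | apply: IH].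
Qed.

Lemma run_prefix sig n g b : exists ext, run S sig n g b = g b ++ ext.
Proof.
elim: n g => [|n IH] g /=; first by exists [::]; rewrite cats0.
case: ifP => _; first by exists [::]; rewrite cats0.
have [ext ->] := IH (step S sig g); rewrite ffunE; case: ifP => _; first by exists ext.
by exists ((S g b, sig b (g b) (S g b)) :: ext); rewrite cat_rcons.
Qed.

Lemma reachable_run sig n g : reachable S g -> valid_strategies sig ->
  reachable S (run S sig n g).
Proof.
elim: n g => //= n IH g reach_g valid; case: ifP => // /negbT ne.
by apply: IH => //; apply: reachable_step.
Qed.

Lemma run_terminal sig n g : reachable S g -> valid_strategies sig -> potential g < n ->
  all_empty S (run S sig n g).
Proof.
elim: n g => // n IH g reach_g valid lt_n /=; case: ifP => // /negbT ne.
apply: IH => //; first exact: reachable_step.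
rewrite ltnS in lt_n; exact: leq_trans (potential_step_lt sig reach_g ne) lt_n.
Qed.

Lemma run_stable sig m n g : reachable S g -> valid_strategies sig -> potential g < m ->
  m <= n -> run S sig n g = run S sig m g.
Proof.
by move=> reach_g valid lt_m /subnKC <-; rewrite run_add run_all_empty ?run_terminal.
Qed.

Lemma mem_run_final sig m g b : reachable S g -> valid_strategies sig ->
  {subset run S sig m g b <= run S sig fuel g b}.
Proof.
move=> reach_g valid e e_in; have lt_fuel := reachable_potential_lt_fuel reach_g.
rewrite -(run_stable reach_g valid lt_fuel (leq_addl m fuel)) run_add.
by have [ext ->] := run_prefix sig fuel (run S sig m g) b; rewrite mem_cat e_in.
Qed.

Lemma mem_run_choice sig m g b : reachable S g -> valid_strategies sig ->
  let g' := run S sig m g in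
  S g' b != set0 -> (S g' b, sig b (g' b) (S g' b)) \in run S sig fuel g b.
Proof.
move=> reach_g valid g' Sb; apply: (mem_run_final (m := m.+1)) => //.
rewrite -addn1 run_add /= -/g'.
have -> : all_empty S g' = false by apply/negbTE/forallPn; exists b.
by rewrite ffunE (negbTE Sb) mem_rcons mem_head.
Qed.

Lemma run_congr sig1 sig2 g :
  (forall m b, let g' := run S sig1 m g in
     S g' b != set0 -> sig2 b (g' b) (S g' b) = sig1 b (g' b) (S g' b)) ->
  forall n, run S sig2 n g = run S sig1 n g.
Proof.
move=> agree n; elim: n g agree => // n IH g agree /=.
case: ifP => // ne; rewrite (step_congr (agree 0)).
by apply: IH => m b; have := agree m.+1 b; rewrite /= ne.
Qed.

Lemma run_idle sig1 sig2 a n g : (forall b, b != a -> sig2 b = sig1 b) ->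
  run S sig1 n g a = g a -> run S sig2 n g = run S sig1 n g.
Proof.
move=> off_a; elim: n g => // n IH g /=; case: ifP => // ne idle.
have Sa : S g a == set0.
  apply/negPn/negP => Sa; move: idle; have [ext ->] := run_prefix sig1 n (step S sig1 g) a.
  rewrite ffunE (negbTE Sa) => /(congr1 size)/eqP.
  by rewrite size_cat size_rcons addSn eqn_leq ltnNge leq_addr.
rewrite (@step_congr sig2 sig1) => [|b Sb]; last by rewrite off_a //; apply: contraNneq Sb => ->.
by apply: IH; rewrite ffunE Sa.
Qed.

Lemma outcome_eq_strategies sig1 sig2 g :
  sig1 =1 sig2 -> outcome S sig1 g = outcome S sig2 g.
Proof.
by move=> eq_sig; rewrite /outcome (@run_congr sig2 sig1) // => m b g' _; rewrite eq_sig.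
Qed.

Lemma consistent_step_truthful g P : consistent_coll g P ->
  consistent_coll (step S (truthful P) g) P.
Proof.
move=> cons_g b e; rewrite ffunE; case: ifP => _; first exact: cons_g.
by rewrite mem_rcons inE => /orP[/eqP-> //|]; apply: cons_g.
Qed.

Lemma reachable_from_empty h : reachable S h ->
  exists k, forall Q, consistent_coll h Q -> run S (truthful Q) k empty = h.
Proof.
elim=> [|g c reach_g [k IH] ne c_in]; first by exists 0.
exists k.+1 => Q cons_Q; rewrite -addn1 run_add IH /= ?(negbTE ne).
  apply/ffunP => i; rewrite !ffunE; case: ifP => // /negbT Si; congr (rcons _ (_, _)).
  by apply: (cons_Q i (S g i, c i)); rewrite ffunE (negbTE Si) mem_rcons mem_head.
move=> b e e_g; apply: cons_Q; rewrite ffunE; case: ifP => // _.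
by rewrite mem_rcons inE e_g orbT.
Qed.

Lemma outcome_sequentialized phi h Q : sequentializes S phi -> reachable S h ->
  consistent_coll h Q -> outcome S (truthful Q) h =1 phi Q.
Proof.
move=> seq_phi reach_h cons_Q b; rewrite -seq_phi.
have [k from_empty] := reachable_from_empty reach_h; rewrite -(from_empty Q cons_Q).
have lt_fuel := reachable_potential_lt_fuel (reach0 S).
by rewrite /outcome -run_add (run_stable (reach0 S) (truthful_valid Q) lt_fuel (leq_addl k fuel)).
Qed.

Lemma outcome_fresh sig h b : reachable S h -> valid_strategies sig ->
  run S sig fuel h b != h b -> outcome S sig h b \notin map snd (h b).
Proof.
move=> reach_h valid moved; rewrite /outcome; have [ext run_ext] := run_prefix sig fuel h b.
rewrite run_ext in moved *; apply: nested_last_choice_fresh.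
  by rewrite -run_ext; apply/reachable_nested/reachable_run.
by apply: contraNneq moved => ->; rewrite cats0.
Qed.

Definition promote_history h P : profile := fun b => promote_choices (h b) (P b).

Definition deviate sig a (s : strategy Obj) : Agent -> strategy Obj :=
  fun b => if b == a then s else sig b.

Lemma consistent_promote_history h P : reachable S h -> consistent_coll h (promote_history h P).
Proof. by move=> reach_h b; apply/consistent_promote_choices/reachable_nested. Qed.

Lemma best_promote_history h P g b : reachable S g -> {subset h b <= g b} ->
  best (promote_history h P b) (S g b) = best (P b) (S g b).
Proof.
by move=> reach_g sub; apply: best_promote_choices_off => e /sub; apply: menu_avoids_history.
Qed.

Lemma run_truthful_promote_history h P n : reachable S h ->
  run S (truthful (promote_history h P)) n h = run S (truthful P) n h.
Proof.
move=> reach_h; apply: run_congr => m b g' _.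
apply: best_promote_history; first exact: reachable_run (truthful_valid P).
by have [ext ->] := run_prefix (truthful P) m h b => e e_h; rewrite mem_cat e_h.
Qed.

Section Deviation.
Variables (phi : rule Agent Obj) (a : Agent) (h : coll) (P : profile) (s : strategy Obj).
Hypotheses (seq_phi : sequentializes S phi) (reach_h : reachable S h) (s_valid : is_strategy s).

Let dev := deviate (truthful P) a s.
Let D := run S dev fuel h.
Let Pdev := upd (promote_history h P) a (promote_choices (D a) (P a)).

Lemma deviate_valid : valid_strategies dev.
Proof. by move=> b; rewrite /dev /deviate; case: eqP => _ //; apply: truthful_valid. Qed.

Lemma run_truthful_deviation n : run S (truthful Pdev) n h = run S dev n h.
Proof.
have reach_D m : reachable S (run S dev m h) by apply: reachable_run deviate_valid.
apply: run_congr => m b g'; rewrite /truthful /straightforward /Pdev /upd.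
case: (b =P a) => [-> | /eqP ba] Sb.
  have mem_D := mem_run_choice reach_h deviate_valid Sb.
  exact: consistent_promote_choices (reachable_nested (reach_D _) a) _ mem_D.
rewrite /dev /deviate (negbTE ba); apply: best_promote_history => [|e e_h]; first exact: reach_D.
by have [ext ->] := run_prefix dev m h b; rewrite mem_cat e_h.
Qed.

Lemma outcome_truthful_promote_history : outcome S (truthful P) h a = phi (promote_history h P) a.
Proof.
rewrite -(outcome_sequentialized seq_phi reach_h (consistent_promote_history P reach_h)).
by rewrite /outcome run_truthful_promote_history.
Qed.

Lemma outcome_deviation : outcome S dev h a = phi Pdev a.
Proof.
rewrite -(outcome_sequentialized seq_phi reach_h) => [|b].
  by rewrite /outcome run_truthful_deviation.
rewrite /Pdev /upd; case: (b =P a) => [-> | _]; last exact: consistent_promote_history.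
move=> e e_h; apply: consistent_promote_choices.
  exact/reachable_nested/reachable_run/deviate_valid.
by have [ext ->] := run_prefix dev fuel h a; rewrite mem_cat e_h.
Qed.

Lemma truthful_no_worse_than_deviation : strategy_proof phi ->
  weak (P a) (outcome S (truthful P) h a) (outcome S dev h a).
Proof.
move=> sp; have off_a b : b != a -> dev b = truthful P b.
  by move/negbTE; rewrite /dev /deviate => ->.
have [idle | moved] := eqVneq (run S (truthful P) fuel h a) (h a).
  by rewrite /outcome (run_idle off_a idle) weak_refl.
have [idle | moved'] := eqVneq (D a) (h a).
  by move: moved; rewrite (run_idle (fun b ba => esym (off_a b ba)) idle) idle eqxx.
have := sp (promote_history h P) a (promote_choices (D a) (P a)).
rewrite -/Pdev -outcome_truthful_promote_history -outcome_deviation.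
apply: weak_promote_choices_off; apply: outcome_fresh => //.
  exact: truthful_valid.
exact: deviate_valid.
Qed.

End Deviation.

Lemma strategy_proof_perfect_ex_post phi : sequentializes S phi -> strategy_proof phi ->
  perfect_ex_post S (fun _ => @straightforward Obj).
Proof. by move=> seq_phi sp a h reach_h s s_valid P; apply: truthful_no_worse_than_deviation. Qed.

Definition out_of_reach P (mu : allocation Agent Obj) a g : Prop :=
  g a != [::] /\ forall x, x \in (last_entry (g a)).1 -> ~~ weak (P a) x (mu a).

Lemma out_of_reach_run P mu a sig n g : reachable S g -> valid_strategies sig ->
  out_of_reach P mu a g -> out_of_reach P mu a (run S sig n g).
Proof.
elim: n g => // n IH g reach_g valid lost /=; case: ifP => // /negbT ne.
apply: IH => //; first exact: reachable_step.
have [gaN0 worse] := lost; rewrite /out_of_reach ffunE; case: ifP => // /negbT Sa.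
rewrite last_entry_rcons; split=> [|x /(subsetP (menu_sub_last reach_g gaN0))/setD1P[_]].
  by case: (g a).
exact: worse.
Qed.

Lemma run_discovery P mu n g : reachable S g ->
  (forall P', Lset P mu P' -> run S (truthful P') n g = run S (truthful P) n g) \/
  exists a, forall P', Lset P mu P' -> out_of_reach P mu a (run S (truthful P') n g).
Proof.
elim: n g => [|n IH] g reach_g; first by left.
have [done_g|ne] := boolP (all_empty S g); first by left => P' _ /=; rewrite done_g.
have [[a [Sa worse]]|no_worse] :=
  classic (exists a, S g a != set0 /\ forall x, x \in S g a -> ~~ weak (P a) x (mu a)).
  right; exists a => P' L /=; rewrite (negbTE ne).
  apply: out_of_reach_run; [exact: reachable_step ne (truthful_valid P') | exact: truthful_valid |].
  rewrite /out_of_reach ffunE (negbTE Sa) last_entry_rcons.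
  by split; [case: (g a) | exact: worse].
have same_step P' : Lset P mu P' -> step S (truthful P') g = step S (truthful P) g.
  move=> L; apply: step_congr => b Sb; apply: best_agrees_above (L b) _.
  apply: NNPP => none; apply: no_worse; exists b; split => // x x_in.
  by apply/negP => x_mu; apply: none; exists x.
have reach_step := reachable_step reach_g ne (truthful_valid P).
have [same | [a lost]] := IH _ reach_step; [left | right; exists a] => P' L /=;
  rewrite (negbTE ne) same_step //; [exact: same | exact: lost].
Qed.

Lemma sequentializes_monotonic_discoverability phi :
  sequentializes S phi -> monotonic_discoverability phi.
Proof.
move=> seq_phi mu P; have [eq_mu|/not_all_ex_not[a neq_a]] := classic (forall a, phi P a = mu a).
  by left.
right; have [same | [b lost]] := run_discovery P mu fuel (reach0 S).
  by exists a => P' L; rewrite -seq_phi /outcome same // -/(outcome _ _ _ a) seq_phi.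
exists b => P' L; rewrite -seq_phi /outcome; have [gbN0 worse] := lost P' L.
move: gbN0 worse; set g := run _ _ _ _ => gbN0 worse eq_mu.
have reach_g : reachable S g by apply: reachable_run (reach0 S) (truthful_valid P').
have := worse _ (nested_choice_in_menu (reachable_nested reach_g b) (mem_last_entry gbN0)).
by rewrite eq_mu weak_refl.
Qed.

End Mechanism.

Section Discovery.
Variables (Agent Obj : finType) (phi : rule Agent Obj).
Local Notation coll := (coll Agent Obj).
Local Notation profile := (profile Agent Obj).
Local Notation empty := (coll_empty Agent Obj).
Local Notation fuel := (fuel Agent Obj).
Implicit Types (g : coll) (P : profile) (a b : Agent).

Definition certified g a : Prop :=
  g a != [::] /\ forall P, consistent_coll g P -> phi P a <> (last_entry (g a)).2.

Definition certifiedb g a : bool :=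
  if excluded_middle_informative (certified g a) then true else false.

Lemma certifiedP g a : reflect (certified g a) (certifiedb g a).
Proof. by rewrite /certifiedb; case: excluded_middle_informative => ?; constructor. Qed.

Definition certified_agent g : option Agent := [pick a | certifiedb g a].

Lemma certified_agent_some g a : certified g a -> exists c, certified_agent g = Some c.
Proof.
rewrite /certified_agent; case: pickP => [c _ _|none]; first by exists c.
by move/certifiedP; rewrite none.
Qed.

Lemma certified_agent_certified g c : certified_agent g = Some c -> certified g c.
Proof. by rewrite /certified_agent; case: pickP => // c' /certifiedP cert_c' [<-]. Qed.

Definition discovery_mech : menufun Agent Obj := fun g i =>
  if g == empty then setT
  else if certified_agent g == Some i then (last_entry (g i)).1 :\ (last_entry (g i)).2
  else set0.

Lemma discovery_mech_PAO : is_PAO discovery_mech.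
Proof.
split=> [i|g _ gN0 i _]; rewrite /discovery_mech ?eqxx ?(negbTE gN0).
  by apply/set0Pn; exists None; rewrite inE.
by case: eqP => _; [exact: subxx | exact: sub0set].
Qed.

Definition on_path P g : Prop :=
  [/\ reachable discovery_mech g, consistent_coll g P &
      forall b, menu_chain (g b) /\ phi P b \in (last_entry (g b)).1].

Lemma discovery_mech_start a : ~~ all_empty discovery_mech empty.
Proof.
by apply/forallPn; exists a; rewrite /discovery_mech eqxx; apply/set0Pn; exists None; rewrite inE.
Qed.

Lemma discovery_mech_moves g b : g b != [::] -> discovery_mech g b != set0 ->
  discovery_mech g b = (last_entry (g b)).1 :\ (last_entry (g b)).2 /\ certified g b.
Proof.
move=> gbN0; rewrite /discovery_mech (negbTE (coll_nonempty gbN0)).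
case: (certified_agent g =P Some b) => [agent_b _|_]; last by rewrite eqxx.
by split; last exact: certified_agent_certified.
Qed.

Lemma on_path_start P : ~~ all_empty discovery_mech empty ->
  on_path P (step discovery_mech (truthful P) empty).
Proof.
move=> ne; split.
- exact: reachable_step (reach0 _) ne (truthful_valid P).
- by apply: consistent_step_truthful => b e; rewrite ffunE.
move=> b; rewrite !ffunE /discovery_mech eqxx.
have -> : ([set: option Obj] == set0) = false by apply/negbTE/set0Pn; exists None; rewrite inE.
by split; [exact: chain_start | rewrite inE].
Qed.

Lemma on_path_step P g : on_path P g -> ~~ all_empty discovery_mech g ->
  on_path P (step discovery_mech (truthful P) g).
Proof.
move=> [reach_g cons_g chain_g] ne; split.
- exact: reachable_step reach_g ne (truthful_valid P).
- exact: consistent_step_truthful.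
move=> b; have [chain_b phi_b] := chain_g b; rewrite ffunE; case: ifP => // /negbT Sb.
have [menu_b [_ cert_b]] := discovery_mech_moves (menu_chain_nonempty chain_b) Sb.
rewrite menu_b in Sb *; rewrite last_entry_rcons; split; first exact: chain_next.
by rewrite !inE phi_b andbT; apply/eqP; apply: cert_b.
Qed.

Lemma on_path_run P n g : on_path P g -> on_path P (run discovery_mech (truthful P) n g).
Proof.
elim: n g => //= n IH g path_g; case: ifP => // /negbT ne.
by apply/IH/on_path_step.
Qed.

Lemma discovery_mech_sequentializes :
  monotonic_discoverability phi -> sequentializes discovery_mech phi.
Proof.
move=> md P i; rewrite /outcome; set F := run _ _ fuel empty.
have [reach_F cons_F chain_F] : on_path P F.
  have start := discovery_mech_start i.
  by rewrite /F /= (negbTE start); apply/on_path_run/on_path_start.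
have lt_fuel := reachable_potential_lt_fuel discovery_mech_PAO (reach0 discovery_mech).
have final_F := run_terminal discovery_mech_PAO (reach0 _) (truthful_valid P) lt_fuel.
have [eq_phi | [a never]] := md (fun b => (last_entry (F b)).2) P; first by rewrite eq_phi.
have cert_a : certified F a.
  split=> [|P' cons_P']; first exact: menu_chain_nonempty (chain_F a).1.
  by apply: never => b; apply: menu_chain_agrees_above (chain_F b).1 (cons_F b) (cons_P' b).
have [c agent_c] := certified_agent_some cert_a.
have [cN0 cert_c] := certified_agent_certified agent_c.
have : discovery_mech F c != set0.
  apply/set0Pn; exists (phi P c).
  rewrite /discovery_mech (negbTE (coll_nonempty cN0)) agent_c eqxx !inE (chain_F c).2 andbT.
  exact/eqP/cert_c.
by move/forallP: final_F => /(_ c) ->.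
Qed.

End Discovery.

Lemma pao_implementable_strategy_proof (Agent Obj : finType) (phi : rule Agent Obj) :
  pao_implementable phi -> strategy_proof phi.
Proof.
move=> [S [S_PAO [seq_phi eq_S]]] P a p'.
have dev_eq : truthful (upd P a p') =1 deviate (truthful P) a (straightforward p').
  by move=> b; rewrite /upd /deviate /truthful; case: eqP.
rewrite -!seq_phi (outcome_eq_strategies _ _ dev_eq).
exact: eq_S (reach0 S) _ (straightforward_is_strategy p') P.
Qed.

Theorem theorem2 (Agent Obj : finType) (phi : rule Agent Obj) :
  individually_rational phi ->
  (pao_implementable phi <-> strategy_proof phi /\ monotonic_discoverability phi) /\
  (pao_implementable phi ->
     forall S : menufun Agent Obj, is_PAO S -> sequentializes S phi ->
       perfect_ex_post S (fun _ => @straightforward Obj)).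
Proof.
move=> _.
have necessary : pao_implementable phi -> strategy_proof phi /\ monotonic_discoverability phi.
  move=> impl; split; first exact: pao_implementable_strategy_proof.
  by case: impl => S [S_PAO [seq_phi _]]; apply: sequentializes_monotonic_discoverability seq_phi.
split; last first.
  move=> /pao_implementable_strategy_proof sp S S_PAO seq_phi.
  exact: (strategy_proof_perfect_ex_post S_PAO seq_phi sp).
split=> // -[sp md]; exists (discovery_mech phi); split; first exact: discovery_mech_PAO.
have seq_phi := discovery_mech_sequentializes md.
by split=> //; exact: (strategy_proof_perfect_ex_post (discovery_mech_PAO phi) seq_phi sp).
Qed.
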